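(* Let $\mathfrak l$ be a real finite-dimensional nilpotent Lie algebra with $\dim\mathfrak l'=2$ and $\mathfrak l'\subset\mathfrak z(\mathfrak l)$ which is admissible, and let $\bar{\mathfrak l}\subset\mathfrak l$ be a 3-dimensional subspace with $[\bar{\mathfrak l},\bar{\mathfrak l}]=\mathfrak l'$. Then $[L_1,L_2]=0$ for all $L_1,L_2\in\mathfrak l$ satisfying $[L_1,\bar{\mathfrak l}]=[L_2,\bar{\mathfrak l}]=0$.
   Context: For a Lie algebra $\mathfrak l$: $\mathfrak l^1=\mathfrak l$, $\mathfrak l^{k+1}=[\mathfrak l,\mathfrak l^k]$, $\mathfrak l'=\mathfrak l^2$, $\mathfrak z(\mathfrak l)$ the centre. An orthogonal $\mathfrak l$-module $(\rho,\mathfrak a)$ is a finite-dimensional real vector space with a nondegenerate symmetric bilinear form $\langle\cdot,\cdot\rangle_{\mathfrak a}$ and a representation by skew-adjoint maps. $C^p(\mathfrak l,\mathfrak a)$: alternating $p$-linear maps with Chevalley–Eilenberg differential $d$; $C^p(\mathfrak l)=C^p(\mathfrak l,\mathbb R)$; $\langle\alpha\wedge\beta\rangle$ is the wedge product followed by contraction with $\langle\cdot,\cdot\rangle_{\mathfrak a}$. $\mathcal Z^2_Q(\mathfrak l,\mathfrak a)=\{(\alpha,\gamma)\in C^2(\mathfrak l,\mathfrak a)\oplus C^3(\mathfrak l): d\alpha=0,d\gamma=\frac12\langle\alpha\wedge\alpha\rangle\}$; the group $C^1(\mathfrak l,\mathfrak a)\oplus C^2(\mathfrak l)$ with $(\tau_1,\sigma_1)*(\tau_2,\sigma_2)=(\tau_1+\tau_2,\sigma_1+\sigma_2+\frac12\langle\tau_1\wedge\tau_2\rangle)$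 acts by $(\alpha,\gamma)(\tau,\sigma)=(\alpha+d\tau,\gamma+d\sigma+\langle(\alpha+\frac12d\tau)\wedge\tau\rangle)$; $\mathcal H^2_Q(\mathfrak l,\mathfrak a)$ is the orbit set. Admissibility: for nilpotent $\mathfrak l$ and semisimple $(\rho,\mathfrak a)$, with $\mathfrak l^{m+2}=0$, $\mathfrak l_{(0)}=\mathfrak z(\mathfrak l)\cap\ker\rho$, $\mathfrak l_{(k)}=\mathfrak z(\mathfrak l)\cap\mathfrak l^{k+1}$ ($k\ge1$), and a representative with $\alpha(\mathfrak l,\mathfrak l)\subset\mathfrak a^{\mathfrak l}$, a class is admissible iff for all $0\le k\le m$: $(A_k)$ whenever $L_0\in\mathfrak l_{(k)}$ and there are $A_0\in\mathfrak a$, $Z_0\in(\mathfrak l^{k+1})^*$ with $\alpha(L,L_0)=0$ and $\gamma(L,L_0,\cdot)=-\langle A_0,\alpha(L,\cdot)\rangle_{\mathfrak a}+\langle Z_0,[L,\cdot]\rangle$ on $\mathfrak l^{k+1}$ for all $L$, then $L_0=0$; $(B_k)$ $\alpha$ applied to the kernel of the bracket map $\mathfrak l\otimes\mathfrak l^{k+1}\to\mathfrak l$ is a nondegenerate subspace of $\mathfrak a$. $\mathfrak l$ is admissible if some semisimple orthogonal module $\mathfrak a$ admits an admissible class in $\mathcal H^2_Q(\mathfrak l,\mathfrak a)$. *)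

(* Finite-dimensional real Lie algebras are modelled as
   'rV[R]_n equipped with a bracket; orthogonal modules as 'rV[R]_m with a
   bilinear form and an action map. *)
From HB Require Import structures.
From mathcomp Require Import all_boot all_order all_algebra.
From mathcomp Require Import reals.
Set Implicit Arguments. Unset Strict Implicit. Unset Printing Implicit Defensive.
Import Order.TTheory GRing.Theory Num.Theory.
Local Open Scope ring_scope.

Section Defs.
Variables (R : fieldType) (n m : nat).
Notation L := 'rV[R]_n.
Notation A := 'rV[R]_m.
Variable br : L -> L -> L.

Definition is_lie_bracket :=
  [/\ forall (c : R) x y z, br (c *: x + y) z = c *: br x z + br y z,
      forall (c : R) x y z, br z (c *: x + y) = c *: br z x + br z y,
      forall x, br x x = 0 &
      forall x y z, br x (br y z) + br y (br z x) + br z (br x y) = 0].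

(* [U, V] : span of all brackets [u, v], u in U, v in V (by bilinearity it is
   spanned by brackets of basis vectors) *)
Definition brspan (U V : {vspace L}) : {vspace L} :=
  <<[seq br x y | x <- (vbasis U : seq L), y <- (vbasis V : seq L)]>>%VS.

(* lower central series: lcs 1 = l, lcs (k+1) = [l, lcs k]; lcs 0 := l *)
Fixpoint lcs (k : nat) : {vspace L} :=
  if k is k'.+1 then (if k' is 0 then fullv else brspan fullv (lcs k'))
  else fullv.

Definition nilpotent := exists k, lcs k = 0%VS.
Definition central (x : L) := forall y, br x y = 0.

Definition is_orth_module (form : A -> A -> R) (act : L -> A -> A) :=
  [/\ forall (c : R) a b e, form (c *: a + b) e = c * form a e + form b e,
      forall a b, form a b = form b a &
      forall a, (forall b, form a b = 0) -> a = 0] /\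
  [/\ forall (c : R) x y v, act (c *: x + y) v = c *: act x v + act y v,
      forall (c : R) x v w, act x (c *: v + w) = c *: act x v + act x w,
      forall x y v, act (br x y) v = act x (act y v) - act y (act x v) &
      forall x v w, form (act x v) w + form v (act x w) = 0].

Definition invariant_sub (act : L -> A -> A) (U : {vspace A}) :=
  forall x v, v \in U -> act x v \in U.

Definition semisimple (act : L -> A -> A) :=
  forall U : {vspace A}, invariant_sub act U ->
    exists W : {vspace A}, [/\ invariant_sub act W, (U + W)%VS = fullv
                             & (U :&: W)%VS = 0%VS].

Definition is_C1 (tau : L -> A) :=
  forall (c : R) x y, tau (c *: x + y) = c *: tau x + tau y.
Definition is_C2 (alpha : L -> L -> A) :=
  [/\ forall (c : R) x y z, alpha (c *: x + y) z = c *: alpha x z + alpha y z,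
      forall (c : R) x y z, alpha z (c *: x + y) = c *: alpha z x + alpha z y &
      forall x, alpha x x = 0].
Definition is_C2s (sigma : L -> L -> R) :=
  [/\ forall (c : R) x y z, sigma (c *: x + y) z = c * sigma x z + sigma y z,
      forall (c : R) x y z, sigma z (c *: x + y) = c * sigma z x + sigma z y &
      forall x, sigma x x = 0].
Definition is_C3s (gamma : L -> L -> L -> R) :=
  [/\ forall (c : R) x y z w, gamma (c *: x + y) z w = c * gamma x z w + gamma y z w,
      forall (c : R) x y z w, gamma z (c *: x + y) w = c * gamma z x w + gamma z y w,
      forall (c : R) x y z w, gamma z w (c *: x + y) = c * gamma z w x + gamma z w y &
      forall x y, [/\ gamma x x y = 0, gamma x y x = 0 & gamma y x x = 0]].

Definition d1 (act : L -> A -> A) (tau : L -> A) (x y : L) : A :=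
  act x (tau y) - act y (tau x) - tau (br x y).
Definition d2 (act : L -> A -> A) (alpha : L -> L -> A) (x y z : L) : A :=
  act x (alpha y z) - act y (alpha x z) + act z (alpha x y)
  - alpha (br x y) z + alpha (br x z) y - alpha (br y z) x.
Definition d2s (sigma : L -> L -> R) (x y z : L) : R :=
  - sigma (br x y) z + sigma (br x z) y - sigma (br y z) x.
Definition d3s (gamma : L -> L -> L -> R) (x0 x1 x2 x3 : L) : R :=
  - gamma (br x0 x1) x2 x3 + gamma (br x0 x2) x1 x3 - gamma (br x0 x3) x1 x2
  - gamma (br x1 x2) x0 x3 + gamma (br x1 x3) x0 x2 - gamma (br x2 x3) x0 x1.

(* wedge products followed by contraction with the form (shuffle convention) *)
Definition half_wedge22 (form : A -> A -> R) (alpha : L -> L -> A)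
    (x0 x1 x2 x3 : L) : R :=
  form (alpha x0 x1) (alpha x2 x3) - form (alpha x0 x2) (alpha x1 x3)
  + form (alpha x0 x3) (alpha x1 x2).
Definition wedge21 (form : A -> A -> R) (beta : L -> L -> A) (tau : L -> A)
    (x y z : L) : R :=
  form (beta x y) (tau z) - form (beta x z) (tau y) + form (beta y z) (tau x).

Definition quad_cocycle form act (alpha : L -> L -> A) (gamma : L -> L -> L -> R) :=
  [/\ is_C2 alpha, is_C3s gamma,
      forall x y z, d2 act alpha x y z = 0 &
      forall x0 x1 x2 x3, d3s gamma x0 x1 x2 x3 = half_wedge22 form alpha x0 x1 x2 x3].

Definition same_class form act (alpha : L -> L -> A) (gamma : L -> L -> L -> R)
    (alpha' : L -> L -> A) (gamma' : L -> L -> L -> R) :=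
  exists (tau : L -> A) (sigma : L -> L -> R),
  [/\ is_C1 tau, is_C2s sigma,
      forall x y, alpha' x y = alpha x y + d1 act tau x y &
      forall x y z, gamma' x y z = gamma x y z + d2s sigma x y z
        + wedge21 form (fun u v => alpha u v + 2^-1 *: d1 act tau u v) tau x y z].

Definition in_lk (act : L -> A -> A) (k : nat) (L0 : L) :=
  central L0 /\ (if k is 0 then forall v, act L0 v = 0 else L0 \in lcs k.+1).

Definition lin_on (U : {vspace L}) (Z0 : L -> R) :=
  forall (c : R) x y, x \in U -> y \in U -> Z0 (c *: x + y) = c * Z0 x + Z0 y.

Definition condA form act (alpha : L -> L -> A) (gamma : L -> L -> L -> R) (k : nat) :=
  forall L0, in_lk act k L0 ->
   (exists (A0 : A) (Z0 : L -> R), lin_on (lcs k.+1) Z0 /\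
      forall Lv, alpha Lv L0 = 0 /\
        forall X, X \in lcs k.+1 ->
          gamma Lv L0 X = - form A0 (alpha Lv X) + Z0 (br Lv X)) ->
   L0 = 0.

(* alpha applied to the kernel of l (x) l^{k+1} -> l; an element of
   l (x) l^{k+1} is a finite sum of x (x) y with y in l^{k+1} *)
Definition alpha_ker (alpha : L -> L -> A) (k : nat) (v : A) :=
  exists s : seq (L * L), [/\ all (fun p => p.2 \in lcs k.+1) s,
     \sum_(p <- s) br p.1 p.2 = 0 & v = \sum_(p <- s) alpha p.1 p.2].

Definition nondeg_on (form : A -> A -> R) (P : A -> Prop) :=
  forall v, P v -> (forall w, P w -> form v w = 0) -> v = 0.

Definition condB form (alpha : L -> L -> A) (k : nat) :=
  nondeg_on form (alpha_ker alpha k).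

(* admissibility criterion (for nilpotent l, semisimple a): some representative
   with alpha(l,l) in a^l satisfies (A_k), (B_k) for all k (for k > m with
   l^{m+2} = 0 both conditions are vacuous) *)
Definition admissible_class form act (alpha : L -> L -> A) (gamma : L -> L -> L -> R) :=
  exists alpha' gamma', [/\ same_class form act alpha gamma alpha' gamma',
     forall x y z, act z (alpha' x y) = 0 &
     forall k, condA form act alpha' gamma' k /\ condB form alpha' k].

End Defs.

Definition admissible_lie (R : fieldType) (n : nat) (br : 'rV[R]_n -> 'rV[R]_n -> 'rV[R]_n) :=
  exists (m : nat) (form : 'rV[R]_m -> 'rV[R]_m -> R) (act : 'rV[R]_n -> 'rV[R]_m -> 'rV[R]_m),
   [/\ is_orth_module br form act, semisimple act &
     exists alpha gamma, quad_cocycle br form act alpha gamma /\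
                         admissible_class br form act alpha gamma].

(* An admissible class has a representative (alpha, gamma) with alpha(l, l) in a^l satisfying (A_1).
   The action of C^1(l, a) + C^2(l) preserves Z^2_Q, so it is again a quadratic cocycle, and invariance
   reduces d alpha = 0 to alpha([x, y], z) = alpha([x, z], y) - alpha([y, z], x).
   Let L1, L2 centralize lbar and W = [L1, L2].  As l' = [lbar, lbar], this identity gives
   alpha(l', Li) = 0 and then alpha(l, W) = 0.  Evaluating d gamma = 1/2 <alpha /\ alpha> on
   (x, y, Li, W) with x, y in lbar gives gamma(l', Li, W) = 0; since gamma(., Li, .) is alternating
   on the plane l', W <> 0 would force gamma(l', Li, l') = 0.  Evaluating on (L1, L2, L, X) with X
   in l' then yields gamma(L, W, X) = <alpha(L1, L2), alpha(L, X)>, which is the hypothesis of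
   (A_1) for L0 = W with A0 = - alpha(L1, L2) and Z0 = 0; hence W = 0. *)

From HB Require Import structures.
From mathcomp Require Import all_boot all_order all_algebra.
From mathcomp Require Import reals.
From mathcomp Require Import ring lra.
Set Implicit Arguments.
Unset Strict Implicit.
Unset Printing Implicit Defensive.
Import GRing.Theory Num.Theory.
Local Open Scope ring_scope.

Section LinearMaps.
Variable K : fieldType.

Section Linear.
Variables (V W : lmodType K) (f : V -> W).
Hypothesis f_lin : linear f.

Lemma linD x y : f (x + y) = f x + f y.
Proof. by have := f_lin 1 x y; rewrite !scale1r. Qed.

Lemma lin0 : f 0 = 0.
Proof. by apply: (addrI (f 0)); rewrite -linD !addr0. Qed.

Lemma linZ c x : f (c *: x) = c *: f x.
Proof. by rewrite -[c *: x]addr0 f_lin lin0 addr0. Qed.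

Lemma linN x : f (- x) = - f x.
Proof. by rewrite -scaleN1r linZ scaleN1r. Qed.

Lemma lin_sum I (r : seq I) (P : pred I) (F : I -> V) :
  f (\sum_(i <- r | P i) F i) = \sum_(i <- r | P i) f (F i).
Proof. by apply: (big_rec2 (fun a b => f a = b)) => [|i a b _ <-]; rewrite ?lin0 ?linD. Qed.
End Linear.

Section Bilinear.
Variables (U V W : lmodType K) (f : U -> V -> W).
Hypothesis f_linl : forall c x y z, f (c *: x + y) z = c *: f x z + f y z.
Hypothesis f_linr : forall c x y z, f z (c *: x + y) = c *: f z x + f z y.

Let f_linl' z : linear (f^~ z). Proof. by move=> c x y; apply: f_linl. Qed.
Let f_linr' z : linear (f z). Proof. by move=> c x y; apply: f_linr. Qed.

Lemma bil0l z : f 0 z = 0. Proof. exact: lin0 (f_linl' z). Qed.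
Lemma bilDl x y z : f (x + y) z = f x z + f y z. Proof. exact: linD (f_linl' z) x y. Qed.
Lemma bilZl c x z : f (c *: x) z = c *: f x z. Proof. exact: linZ (f_linl' z) c x. Qed.
Lemma bilNl x z : f (- x) z = - f x z. Proof. exact: linN (f_linl' z) x. Qed.
Lemma bil0r z : f z 0 = 0. Proof. exact: lin0 (f_linr' z). Qed.
Lemma bilDr x y z : f z (x + y) = f z x + f z y. Proof. exact: linD (f_linr' z) x y. Qed.
Lemma bilZr c x z : f z (c *: x) = c *: f z x. Proof. exact: linZ (f_linr' z) c x. Qed.
Lemma bilNr x z : f z (- x) = - f z x. Proof. exact: linN (f_linr' z) x. Qed.
End Bilinear.

Section Alternating.
Variables (V W : lmodType K) (f : V -> V -> W).
Hypothesis f_linl : forall c x y z, f (c *: x + y) z = c *: f x z + f y z.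
Hypothesis f_linr : forall c x y z, f z (c *: x + y) = c *: f z x + f z y.
Hypothesis f_alt : forall x, f x x = 0.

Lemma alt_skew x y : f x y = - f y x.
Proof.
apply/eqP; rewrite -addr_eq0 -[X in _ == X](f_alt (x + y)).
by rewrite (bilDl f_linl) !(bilDr f_linr) !f_alt add0r addr0 addrC.
Qed.
End Alternating.
End LinearMaps.

Section AlternatingPlane.
Variables (K : fieldType) (V : vectType K) (g : V -> V -> K).
Hypothesis g_linl : forall c x y z, g (c *: x + y) z = c * g x z + g y z.
Hypothesis g_linr : forall c x y z, g z (c *: x + y) = c * g z x + g z y.
Hypothesis g_alt : forall x, g x x = 0.

Lemma dim2_span (S : {vspace V}) :
  \dim S = 2%N -> exists b1 b2, S = (<[b1]> + <[b2]>)%VS.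
Proof.
move=> dimS; have : size (vbasis S) = 2%N by rewrite size_tuple.
have := span_basis (vbasisP S).
case: (vbasis S : seq V) => [|b1 [|b2 []]] // <- _.
by exists b1, b2; rewrite span_cons span_seq1.
Qed.

Lemma alt_plane_coord b1 b2 a1 a2 c1 c2 :
  g (a1 *: b1 + a2 *: b2) (c1 *: b1 + c2 *: b2) = (a1 * c2 - a2 * c1) * g b1 b2.
Proof.
have gZl c x z : g (c *: x) z = c * g x z by exact: (bilZl (W := K^o) g_linl).
have gZr c x z : g z (c *: x) = c * g z x by exact: (bilZr (W := K^o) g_linr).
have g_skew x y : g x y = - g y x by exact: (alt_skew (W := K^o) g_linl g_linr g_alt).
rewrite !(g_linl, g_linr, gZl, gZr) !g_alt (g_skew b2 b1); ring.
Qed.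

Lemma alt_plane_eq0 (S : {vspace V}) w : \dim S = 2%N -> w \in S -> w != 0 ->
  (forall y, y \in S -> g y w = 0) -> forall u x, u \in S -> x \in S -> g u x = 0.
Proof.
move=> /dim2_span[b1 [b2 ->]] Sw w_neq0 gSw.
have coordP v : v \in (<[b1]> + <[b2]>)%VS -> exists a1 a2, v = a1 *: b1 + a2 *: b2.
  by case/memv_addP => _ /vlineP[a1 ->] [_ /vlineP[a2 ->] ->]; exists a1, a2.
have [w1 [w2 defw]] := coordP w Sw.
have g12 : g b1 b2 = 0.
  have gb a1 a2 : (a1 * w2 - a2 * w1) * g b1 b2 = 0.
    by rewrite -alt_plane_coord -defw gSw // memv_add ?memvZ ?memv_line.
  apply: contraTeq w_neq0 => g12_neq0; rewrite negbK defw.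
  move: (gb 1 0) (gb 0 1); rewrite !mul0r !mul1r sub0r subr0 mulNr.
  move=> /eqP; rewrite mulf_eq0 (negbTE g12_neq0) orbF => /eqP ->.
  move=> /eqP; rewrite oppr_eq0 mulf_eq0 (negbTE g12_neq0) orbF => /eqP ->.
  by rewrite !scale0r addr0.
move=> u x /coordP[a1 [a2 ->]] /coordP[c1 [c2 ->]].
by rewrite alt_plane_coord g12 mulr0.
Qed.
End AlternatingPlane.

Section BracketSpan.
Variables (K : fieldType) (n : nat) (br : 'rV[K]_n -> 'rV[K]_n -> 'rV[K]_n).
Local Notation L := 'rV[K]_n.

Lemma brspan_lin_eq0 (W : lmodType K) (f : L -> W) (U V : {vspace L}) :
  linear f -> (forall x y, x \in U -> y \in V -> f (br x y) = 0) ->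
  forall z, z \in brspan br U V -> f z = 0.
Proof.
move=> f_lin f_br z; rewrite /brspan; set s := [seq _ | _ <- _, _ <- _] => zs.
rewrite (coord_span (X := in_tuple s) zs) (lin_sum f_lin) big1 // => i _.
rewrite (linZ f_lin); have : (in_tuple s)`_i \in s by apply: mem_nth.
by case/allpairsP => -[x y] [/= /vbasis_mem Ux /vbasis_mem Vy ->]; rewrite f_br ?scaler0.
Qed.

Hypothesis br_linl : forall c x y z, br (c *: x + y) z = c *: br x z + br y z.
Hypothesis br_linr : forall c x y z, br z (c *: x + y) = c *: br z x + br z y.

Lemma mem_brspan (U V : {vspace L}) x y :
  x \in U -> y \in V -> br x y \in brspan br U V.
Proof.
move=> /coord_vbasis-> /coord_vbasis->.
rewrite (lin_sum (f := br^~ _)) => [|c u v]; last exact: br_linl.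
apply: memv_suml => i _; rewrite (bilZl br_linl); apply: memvZ.
rewrite (lin_sum (f := br _)) => [|c u v]; last exact: br_linr.
apply: memv_suml => j _; rewrite (bilZr br_linr); apply: memvZ.
by apply/memv_span/allpairs_f; apply: mem_nth; rewrite size_tuple.
Qed.
End BracketSpan.

Local Ltac rowring := apply/rowP => i; rewrite !mxE; ring.
Local Ltac rowlra_with H := apply/rowP => i; move/rowP/(_ i): H; rewrite !mxE => H; lra.

Section QuadraticCocycles.
Variables (R : realFieldType) (n m : nat).
Local Notation L := 'rV[R]_n.
Local Notation A := 'rV[R]_m.
Variables (br : L -> L -> L) (form : A -> A -> R) (act : L -> A -> A).
Hypothesis Hbr : is_lie_bracket br.
Hypothesis Hmod : is_orth_module br form act.

Lemma br_linl c x y z : br (c *: x + y) z = c *: br x z + br y z. Proof. by case: Hbr. Qed.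
Lemma br_linr c x y z : br z (c *: x + y) = c *: br z x + br z y. Proof. by case: Hbr. Qed.
Lemma br_alt x : br x x = 0. Proof. by case: Hbr. Qed.
Lemma brNr x z : br z (- x) = - br z x. Proof. exact: bilNr br_linr x z. Qed.
Lemma br_skew x y : br x y = - br y x. Proof. exact: alt_skew br_linl br_linr br_alt x y. Qed.

Lemma br_jacobi x y z : br (br x y) z - br (br x z) y + br (br y z) x = 0.
Proof.
have [_ _ _ /(_ x y z) jacobi] := Hbr.
rewrite (br_skew (br x y) z) (br_skew (br x z) y) (br_skew x z) brNr (br_skew (br y z) x).
rowlra_with jacobi.
Qed.

Lemma br_derived x y : br x y \in lcs br 2.
Proof. exact: (mem_brspan br_linl br_linr (memvf x) (memvf y)). Qed.

(* [aform]: the form of the module a (the names [form*] belong to sesquilinear). *)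
Lemma aform_linl c a b e : form (c *: a + b) e = c * form a e + form b e.
Proof. by case: Hmod => [[]]. Qed.
Lemma aformC a b : form a b = form b a. Proof. by case: Hmod => [[]]. Qed.
Lemma aform_linr c a b e : form e (c *: a + b) = c * form e a + form e b.
Proof. by rewrite !(aformC e) aform_linl. Qed.
Lemma aformDl a b e : form (a + b) e = form a e + form b e.
Proof. exact: (bilDl (W := R^o) aform_linl a b e). Qed.
Lemma aformZl c a e : form (c *: a) e = c * form a e.
Proof. exact: (bilZl (W := R^o) aform_linl c a e). Qed.
Lemma aformNl a e : form (- a) e = - form a e.
Proof. exact: (bilNl (W := R^o) aform_linl a e). Qed.
Lemma aform0l e : form 0 e = 0. Proof. exact: (bil0l (W := R^o) aform_linl e). Qed.
Lemma aformDr a b e : form e (a + b) = form e a + form e b.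
Proof. exact: (bilDr (W := R^o) aform_linr a b e). Qed.
Lemma aformNr a e : form e (- a) = - form e a.
Proof. exact: (bilNr (W := R^o) aform_linr a e). Qed.
Lemma aform0r e : form e 0 = 0. Proof. exact: (bil0r (W := R^o) aform_linr e). Qed.

Lemma act_linl c x y v : act (c *: x + y) v = c *: act x v + act y v.
Proof. by case: Hmod => _ []. Qed.
Lemma act_linr c x v w : act x (c *: v + w) = c *: act x v + act x w.
Proof. by case: Hmod => _ []. Qed.
Lemma act_br x y v : act (br x y) v = act x (act y v) - act y (act x v).
Proof. by case: Hmod => _ []. Qed.
Lemma aform_act x v w : form (act x v) w = - form v (act x w).
Proof. by case: Hmod => _ [_ _ _ /(_ x v w) /eqP]; rewrite addr_eq0 => /eqP. Qed.
Let act_linr' c v w x : act x (c *: v + w) = c *: act x v + act x w.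
Proof. exact: act_linr. Qed.
Lemma actDr x v w : act x (v + w) = act x v + act x w. Proof. exact: bilDr act_linr' v w x. Qed.
Lemma actNr x v : act x (- v) = - act x v. Proof. exact: bilNr act_linr' v x. Qed.

Section Cochain2.
Variable alpha : L -> L -> A.
Hypothesis Halpha : is_C2 alpha.
Lemma C2_linl c x y z : alpha (c *: x + y) z = c *: alpha x z + alpha y z.
Proof. by case: Halpha. Qed.
Lemma C2_linr c x y z : alpha z (c *: x + y) = c *: alpha z x + alpha z y.
Proof. by case: Halpha. Qed.
Lemma C2_alt x : alpha x x = 0. Proof. by case: Halpha. Qed.
Lemma C20l z : alpha 0 z = 0. Proof. exact: bil0l C2_linl z. Qed.
Lemma C2_skew x y : alpha x y = - alpha y x. Proof. exact: alt_skew C2_linl C2_linr C2_alt x y. Qed.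
End Cochain2.

Lemma is_C2_lincomb (alpha alpha1 alpha2 : L -> L -> A) k :
  (forall x y, alpha x y = alpha1 x y + k *: alpha2 x y) ->
  is_C2 alpha1 -> is_C2 alpha2 -> is_C2 alpha.
Proof.
move=> Ealpha H1 H2; split=> [c x y z|c x y z|x]; rewrite !Ealpha.
- rewrite (C2_linl H1) (C2_linl H2); rowring.
- rewrite (C2_linr H1) (C2_linr H2); rowring.
- by rewrite (C2_alt H1) (C2_alt H2) scaler0 addr0.
Qed.

Section Cochain2s.
Variable sig : L -> L -> R.
Hypothesis Hsig : is_C2s sig.
Lemma C2s_linl c x y z : sig (c *: x + y) z = c * sig x z + sig y z.
Proof. by case: Hsig. Qed.
Lemma C2s_linr c x y z : sig z (c *: x + y) = c * sig z x + sig z y.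
Proof. by case: Hsig. Qed.
Lemma C2s_alt x : sig x x = 0. Proof. by case: Hsig. Qed.
Lemma C2sDl x y z : sig (x + y) z = sig x z + sig y z.
Proof. exact: (bilDl (W := R^o) C2s_linl x y z). Qed.
Lemma C2sNl x z : sig (- x) z = - sig x z.
Proof. exact: (bilNl (W := R^o) C2s_linl x z). Qed.
Lemma C2s0l z : sig 0 z = 0. Proof. exact: (bil0l (W := R^o) C2s_linl z). Qed.
Lemma C2s_skew x y : sig x y = - sig y x.
Proof. exact: (alt_skew (W := R^o) C2s_linl C2s_linr C2s_alt x y). Qed.
End Cochain2s.

Section Cochain3s.
Variable gamma : L -> L -> L -> R.
Hypothesis Hgamma : is_C3s gamma.
Lemma C3s_lin1 c x y z w : gamma (c *: x + y) z w = c * gamma x z w + gamma y z w.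
Proof. by case: Hgamma. Qed.
Lemma C3s_lin2 c x y z w : gamma z (c *: x + y) w = c * gamma z x w + gamma z y w.
Proof. by case: Hgamma. Qed.
Lemma C3s_lin3 c x y z w : gamma z w (c *: x + y) = c * gamma z w x + gamma z w y.
Proof. by case: Hgamma. Qed.
Lemma C3s_alt12 x y : gamma x x y = 0. Proof. by case: Hgamma => _ _ _ /(_ x y) []. Qed.
Lemma C3s_alt13 x y : gamma x y x = 0. Proof. by case: Hgamma => _ _ _ /(_ x y) []. Qed.
Lemma C3s_alt23 x y : gamma y x x = 0. Proof. by case: Hgamma => _ _ _ /(_ x y) []. Qed.
Lemma C3s01 y z : gamma 0 y z = 0.
Proof. exact: (bil0l (W := R^o) (f := fun x => gamma x y) (fun c x x' => C3s_lin1 c x x' y) z). Qed.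
Lemma C3s_skew12 x y z : gamma x y z = - gamma y x z.
Proof.
exact: (alt_skew (W := R^o) (f := fun x y => gamma x y z)
  (fun c x x' y => C3s_lin1 c x x' y z) (fun c x x' y => C3s_lin2 c x x' y z)
  (fun x => C3s_alt12 x z) x y).
Qed.
End Cochain3s.

Lemma is_C3s_add (gamma gamma1 gamma2 : L -> L -> L -> R) :
  (forall x y z, gamma x y z = gamma1 x y z + gamma2 x y z) ->
  is_C3s gamma1 -> is_C3s gamma2 -> is_C3s gamma.
Proof.
move=> Egamma H1 H2; split=> [c x y z w|c x y z w|c x y z w|x y]; rewrite ?Egamma.
- rewrite (C3s_lin1 H1) (C3s_lin1 H2); ring.
- rewrite (C3s_lin2 H1) (C3s_lin2 H2); ring.
- rewrite (C3s_lin3 H1) (C3s_lin3 H2); ring.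
- by split; rewrite !(C3s_alt12 H1, C3s_alt13 H1, C3s_alt23 H1,
                     C3s_alt12 H2, C3s_alt13 H2, C3s_alt23 H2) addr0.
Qed.

Section Coboundary1.
Variable tau : L -> A.
Hypothesis tau_lin : is_C1 tau.
Local Notation dtau := (d1 br act tau).

Lemma tauD x y : tau (x + y) = tau x + tau y. Proof. exact: linD tau_lin x y. Qed.
Lemma tauN x : tau (- x) = - tau x. Proof. exact: linN tau_lin x. Qed.
Lemma tau0 : tau 0 = 0. Proof. exact: lin0 tau_lin. Qed.

Lemma is_C2_d1 : is_C2 dtau.
Proof.
split=> [c x y z|c x y z|x]; rewrite /d1.
- by rewrite act_linl br_linl !tau_lin act_linr; rowring.
- by rewrite act_linl br_linr !tau_lin act_linr; rowring.
- by rewrite br_alt tau0 subrr subr0.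
Qed.

Lemma d2_d1 x y z : d2 br act dtau x y z = 0.
Proof.
have := congr1 tau (br_jacobi x y z); rewrite tau0 !(tauD, tauN) => jacobi.
rewrite /d2 /d1 !act_br !(actDr, actNr); rowlra_with jacobi.
Qed.

Lemma is_C3s_wedge21 eta : is_C2 eta -> is_C3s (wedge21 form eta tau).
Proof.
move=> Heta; split=> [c x y z w|c x y z w|c x y z w|x y]; rewrite /wedge21.
1-3: by rewrite !(C2_linl Heta, C2_linr Heta, tau_lin, aform_linl, aform_linr); ring.
by rewrite (C2_alt Heta) aform0l (C2_skew Heta y x) aformNl; split; ring.
Qed.

Lemma d3s_wedge21 eta a b c d :
  d2 br act eta a b c = 0 -> d2 br act eta a b d = 0 ->
  d2 br act eta a c d = 0 -> d2 br act eta b c d = 0 ->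
  d3s br (wedge21 form eta tau) a b c d =
    form (eta a b) (dtau c d) + form (eta c d) (dtau a b)
  - form (eta a c) (dtau b d) - form (eta b d) (dtau a c)
  + form (eta a d) (dtau b c) + form (eta b c) (dtau a d).
Proof.
move=> /(congr1 (form^~ (tau d))) e1 /(congr1 (form^~ (tau c))) e2.
move=> /(congr1 (form^~ (tau b))) e3 /(congr1 (form^~ (tau a))) e4.
move: e1 e2 e3 e4; rewrite /d2 !aform0l !(aformDl, aformNl, aform_act) => e1 e2 e3 e4.
rewrite /d3s /wedge21 /d1 !(aformDr, aformNr); lra.
Qed.
End Coboundary1.

Section Coboundary2.
Variable sig : L -> L -> R.
Hypothesis Hsig : is_C2s sig.

Lemma is_C3s_d2s : is_C3s (d2s br sig).
Proof.
split=> [c x y z w|c x y z w|c x y z w|x y]; rewrite /d2s.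
1-3: by rewrite !(br_linl, br_linr, C2s_linl Hsig, C2s_linr Hsig); ring.
by rewrite br_alt (C2s0l Hsig) (br_skew y x) (C2sNl Hsig); split; ring.
Qed.

Lemma d3s_d2s a b c d : d3s br (d2s br sig) a b c d = 0.
Proof.
move: (congr1 (sig^~ d) (br_jacobi a b c)) (congr1 (sig^~ c) (br_jacobi a b d)).
move: (congr1 (sig^~ b) (br_jacobi a c d)) (congr1 (sig^~ a) (br_jacobi b c d)).
rewrite /= !(C2s0l Hsig) !(C2sDl Hsig, C2sNl Hsig) => j1 j2 j3 j4.
have k1 := C2s_skew Hsig (br c d) (br a b); have k2 := C2s_skew Hsig (br b d) (br a c).
have k3 := C2s_skew Hsig (br b c) (br a d).
rewrite /d3s /d2s; lra.
Qed.
End Coboundary2.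

Section SameClass.
Variables (al al' : L -> L -> A) (ga ga' : L -> L -> L -> R).
Variables (tau : L -> A) (sig : L -> L -> R).
Hypothesis Hq : quad_cocycle br form act al ga.
Hypothesis tau_lin : is_C1 tau.
Hypothesis Hsig : is_C2s sig.
Hypothesis Eal' : forall x y, al' x y = al x y + d1 br act tau x y.
Hypothesis Ega' : forall x y z, ga' x y z = ga x y z + d2s br sig x y z
  + wedge21 form (fun u v => al u v + 2^-1 *: d1 br act tau u v) tau x y z.
Local Notation dtau := (d1 br act tau).

Let Hal : is_C2 al. Proof. by case: Hq. Qed.
Let d2al x y z : d2 br act al x y z = 0. Proof. by case: Hq. Qed.

Lemma same_class_C2 : is_C2 al'.
Proof.
apply: (is_C2_lincomb (k := 1)) Hal (is_C2_d1 tau_lin) => x y.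
by rewrite scale1r Eal'.
Qed.

Lemma same_class_d2 x y z : d2 br act al' x y z = 0.
Proof.
have -> : d2 br act al' x y z = d2 br act al x y z + d2 br act dtau x y z.
  by rewrite /d2 !Eal' !actDr; rowring.
by rewrite d2al d2_d1 ?addr0.
Qed.

Lemma same_class_C3s : is_C3s ga'.
Proof.
have Hbeta : is_C2 (fun u v => al u v + 2^-1 *: dtau u v).
  exact: is_C2_lincomb Hal (is_C2_d1 tau_lin).
have Hga : is_C3s ga by case: Hq.
apply: (is_C3s_add Ega') (is_C3s_wedge21 tau_lin Hbeta).
exact: (is_C3s_add (fun x y z => erefl) Hga (is_C3s_d2s Hsig)).
Qed.

Lemma same_class_d3s a b c d : d3s br ga' a b c d = half_wedge22 form al' a b c d.
Proof.
have -> : d3s br ga' a b c d = d3s br ga a b c d + d3s br (d2s br sig) a b c d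
   + (d3s br (wedge21 form al tau) a b c d
      + 2^-1 * d3s br (wedge21 form dtau tau) a b c d).
  by rewrite /d3s !Ega' /wedge21 !(aformDl, aformZl); ring.
have [_ _ _ ->] := Hq.
rewrite d3s_d2s // !d3s_wedge21 ?d2al ?d2_d1 // /half_wedge22 !Eal'.
move: dtau => dt; rewrite !(aformDl, aformDr).
have s1 := aformC (dt a b) (al c d); have s2 := aformC (dt a c) (al b d).
have s3 := aformC (dt a d) (al b c); have s4 := aformC (dt c d) (dt a b).
have s5 := aformC (dt b d) (dt a c); have s6 := aformC (dt b c) (dt a d).
lra.
Qed.
End SameClass.

Lemma same_class_quad_cocycle al ga al' ga' :
  quad_cocycle br form act al ga -> same_class br form act al ga al' ga' ->
  quad_cocycle br form act al' ga'.
Proof.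
move=> Hq [tau [sig [tau_lin Hsig Eal' Ega']]]; split.
- exact: same_class_C2 Hq tau_lin Eal'.
- exact: same_class_C3s Hq tau_lin Hsig Ega'.
- exact: same_class_d2 Hq tau_lin Eal'.
- exact: same_class_d3s Hq tau_lin Hsig Eal' Ega'.
Qed.

Lemma invariant_cocycle al ga : quad_cocycle br form act al ga ->
  (forall x y z, act z (al x y) = 0) ->
  forall x y z, al (br x y) z = al (br x z) y - al (br y z) x.
Proof.
move=> [_ _ d2al _] al_inv x y z; move: (d2al x y z); rewrite /d2 !al_inv => d2xyz.
rowlra_with d2xyz.
Qed.

Definition centralizes (U : {vspace L}) (c : L) := forall y, y \in U -> br c y = 0.

Section CentralizerOfLbar.
Variables (al : L -> L -> A) (ga : L -> L -> L -> R) (Lbar : {vspace L}).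
Hypothesis Hq : quad_cocycle br form act al ga.
Hypothesis al_inv : forall x y z, act z (al x y) = 0.
Hypothesis derived_central : forall u, u \in lcs br 2 -> central br u.
Hypothesis derived_Lbar : brspan br Lbar Lbar = lcs br 2.
Hypothesis dim_derived : \dim (lcs br 2) = 2%N.
Variables c1 c2 : L.
Hypotheses (c1_Lbar : centralizes Lbar c1) (c2_Lbar : centralizes Lbar c2).

Let Hal : is_C2 al. Proof. by case: Hq. Qed.
Let Hga : is_C3s ga. Proof. by case: Hq. Qed.
Let d3ga a b c d : d3s br ga a b c d = half_wedge22 form al a b c d.
Proof. by case: Hq. Qed.
Let al_cocycle := invariant_cocycle Hq al_inv.
Let W := br c1 c2.

Lemma derived_central_r y u : u \in lcs br 2 -> br y u = 0.
Proof. by move/derived_central/(_ y); rewrite br_skew => /eqP; rewrite oppr_eq0 => /eqP. Qed.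

Lemma al_derived_centralizer c Y : centralizes Lbar c -> Y \in lcs br 2 -> al Y c = 0.
Proof.
move=> c_Lbar; rewrite -derived_Lbar; apply: (brspan_lin_eq0 (f := al^~ c)).
  by move=> k x y; apply: C2_linl.
move=> x y Lx Ly; rewrite al_cocycle (br_skew x c) (br_skew y c).
by rewrite !c_Lbar // oppr0 !(C20l Hal) subrr.
Qed.

Lemma al_br_centralizers z : al z W = 0.
Proof.
rewrite (C2_skew Hal) al_cocycle.
by rewrite !al_derived_centralizer ?br_derived ?subrr ?oppr0.
Qed.

Lemma ga_derived_centralizer c Y : centralizes Lbar c -> Y \in lcs br 2 -> ga Y c W = 0.
Proof.
move=> c_Lbar; rewrite -derived_Lbar.
apply: (brspan_lin_eq0 (W := R^o) (f := fun Y => ga Y c W)).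
  by move=> k x y; apply: C3s_lin1.
move=> x y Lx Ly; have := d3ga x y c W; rewrite /d3s /half_wedge22.
rewrite (br_skew x c) (br_skew y c) (c_Lbar _ Lx) (c_Lbar _ Ly) oppr0.
rewrite !(derived_central_r _ (br_derived c1 c2)) !(C3s01 Hga) !al_br_centralizers !aform0r aform0l.
lra.
Qed.

Lemma ga_derived_centralizer_derived c : centralizes Lbar c -> W != 0 ->
  forall U X, U \in lcs br 2 -> X \in lcs br 2 -> ga U c X = 0.
Proof.
move=> c_Lbar W_neq0; apply: (alt_plane_eq0 (g := fun U X => ga U c X)) dim_derived _ W_neq0 _.
- by move=> k x y z; apply: C3s_lin1.
- by move=> k x y z; apply: C3s_lin3.
- by move=> x; apply: C3s_alt13.
- exact: br_derived.
- by move=> Y; apply: ga_derived_centralizer.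
Qed.

Lemma centralizers_commute : condA br form act al ga 1 -> W = 0.
Proof.
move=> HA; have [//|W_neq0] := eqVneq W 0.
apply: HA; first by split; [apply/derived_central/br_derived | apply: br_derived].
exists (- al c1 c2), (fun _ => 0); split=> [k x y _ _|Lv]; first by rewrite mulr0 addr0.
split=> [|X X_derived]; first exact: al_br_centralizers.
have := d3ga c1 c2 Lv X; rewrite /d3s /half_wedge22.
rewrite !(derived_central_r _ X_derived) !(C3s01 Hga).
rewrite (ga_derived_centralizer_derived c2_Lbar W_neq0 (br_derived c1 Lv) X_derived).
rewrite (ga_derived_centralizer_derived c1_Lbar W_neq0 (br_derived c2 Lv) X_derived).
rewrite (C2_skew Hal c1 X) (C2_skew Hal c2 X).
rewrite (al_derived_centralizer c1_Lbar X_derived) (al_derived_centralizer c2_Lbar X_derived).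
rewrite !oppr0 aform0r aform0l aformNl (C3s_skew12 Hga Lv) /W; lra.
Qed.
End CentralizerOfLbar.
End QuadraticCocycles.

Theorem lemma4 (R : realType) (n : nat)
    (br : 'rV[R]_n -> 'rV[R]_n -> 'rV[R]_n) (Lbar : {vspace 'rV[R]_n}) :
  is_lie_bracket br -> nilpotent br ->
  \dim (lcs br 2) = 2%N ->
  (forall u, u \in lcs br 2 -> central br u) ->
  admissible_lie br ->
  \dim Lbar = 3%N -> brspan br Lbar Lbar = lcs br 2 ->
  forall L1 L2 : 'rV[R]_n,
    (forall y, y \in Lbar -> br L1 y = 0) ->
    (forall y, y \in Lbar -> br L2 y = 0) ->
    br L1 L2 = 0.
Proof.
move=> Hbr _ dim_derived derived_central [m [form [act [Hmod _ [al [ga [Hq]]]]]]].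
move=> [al' [ga' [Hsame al'_inv /(_ 1%N) [HA _]]]] _ derived_Lbar L1 L2 L1_Lbar L2_Lbar.
have Hq' := same_class_quad_cocycle Hbr Hmod Hq Hsame.
exact: (centralizers_commute Hbr Hmod Hq' al'_inv derived_central derived_Lbar
  dim_derived L1_Lbar L2_Lbar HA).
Qed.
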